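(* Let $A\subseteq\mathcal{R}$ be outer measurable and let $I$ be an interval in $\mathcal{R}$. Then $A\cap I$ is outer measurable.
   Context: $\mathcal{R}$ denotes the Levi-Civita field: functions $x:\mathbb{Q}\to\mathbb{R}$ with left-finite support, with componentwise addition and formal power series multiplication, ordered by $x>0$ iff $x\ne0$ and $x[\min\operatorname{supp}x]>0$; it is a non-Archimedean ordered field extension of $\mathbb{R}$, Cauchy complete in the order topology, in which all limits and series are taken (a series $\sum a_n$ converges iff $a_n\to0$). An interval is a set $[a,b],[a,b),(a,b]$ or $(a,b)$ with $a<b$ in $\mathcal{R}$, of length $l=b-a$. A cover of $A\subseteq\mathcal{R}$ is a sequence of intervals $(S_n)_{n\ge1}$ with $A\subseteq\bigcup_n S_n$ and $\sum_n l(S_n)$ convergent in $\mathcal{R}$. $A$ is called outer measurable if the infimum $\inf\{\sum_n l(S_n): (S_n)\text{ a cover of }A\}$ exists in $\mathcal{R}$; this infimum is then called the outer measure $M_u(A)$. *)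

From mathcomp Require Import all_boot all_order all_algebra.
From Stdlib Require Import Reals.
Set Implicit Arguments. Unset Strict Implicit. Unset Printing Implicit Defensive.
Import Order.TTheory GRing.Theory Num.Theory.

(** * The Levi-Civita field (additive ordered group structure)
    Elements: functions x : Q -> R with left-finite support, i.e. for every
    q : Q only finitely many t < q have x t <> 0. *)

Definition left_finite (x : rat -> R) : Prop :=
  forall q : rat, exists s : seq rat,
    forall t : rat, (t < q)%O -> x t <> R0 -> t \in s.

Definition LC := {x : rat -> R | left_finite x}.

Definition coef (x : LC) : rat -> R := proj1_sig x.

Lemma left_finite0 : left_finite (fun _ => R0).
Proof. by move=> q; exists [::] => t _ []. Qed.

Lemma left_finite_add (x y : LC) :
  left_finite (fun q => Rplus (coef x q) (coef y q)).
Proof.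
move=> q; case: (proj2_sig x q) => s1 H1; case: (proj2_sig y q) => s2 H2.
exists (s1 ++ s2) => t tq Hne; rewrite mem_cat; apply/orP.
case: (Req_dec (coef x t) R0) => Hx.
- right; apply: H2 => // Hy; apply: Hne; rewrite /coef in Hx *; rewrite Hx Hy; exact: Rplus_0_r.
- by left; apply: H1.
Qed.

Lemma left_finite_opp (x : LC) : left_finite (fun q => Ropp (coef x q)).
Proof.
move=> q; case: (proj2_sig x q) => s H; exists s => t tq Hne; apply: H => // Hx.
by apply: Hne; rewrite /coef Hx Ropp_0.
Qed.

Definition LC0 : LC := exist _ _ left_finite0.
Definition LCadd (x y : LC) : LC := exist _ _ (left_finite_add x y).
Definition LCopp (x : LC) : LC := exist _ _ (left_finite_opp x).
Definition LCsub (x y : LC) : LC := LCadd x (LCopp y).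

(** x > 0 iff x <> 0 and x[min supp x] > 0: there is q with x q > 0 and
    x t = 0 for all t < q (then q = min supp x). *)
Definition LCpos (x : LC) : Prop :=
  exists q : rat, Rlt R0 (coef x q) /\ forall t : rat, (t < q)%O -> coef x t = R0.

Definition LClt (x y : LC) : Prop := LCpos (LCsub y x).
Definition LCeq (x y : LC) : Prop := forall q, coef x q = coef y q.
Definition LCle (x y : LC) : Prop := LClt x y \/ LCeq x y.

Definition LCcvg (u : nat -> LC) (l : LC) : Prop :=
  forall eps : LC, LCpos eps -> exists N : nat, forall n : nat, (N <= n)%N ->
    LClt (LCopp eps) (LCsub (u n) l) /\ LClt (LCsub (u n) l) eps.

Fixpoint LCpartial (a : nat -> LC) (n : nat) : LC :=
  match n with
  | O => LC0
  | S m => LCadd (LCpartial a m) (a m)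
  end.

Definition LChas_sum (a : nat -> LC) (s : LC) : Prop := LCcvg (LCpartial a) s.

Record interval := Interval { ia : LC; ib : LC; iclosed_l : bool; iclosed_r : bool }.

Definition is_interval (I : interval) : Prop := LClt (ia I) (ib I).

Definition in_interval (I : interval) (x : LC) : Prop :=
  (if iclosed_l I then LCle (ia I) x else LClt (ia I) x) /\
  (if iclosed_r I then LCle x (ib I) else LClt x (ib I)).

Definition ilength (I : interval) : LC := LCsub (ib I) (ia I).

Definition cover_with_sum (A : LC -> Prop) (S : nat -> interval) (s : LC) : Prop :=
  (forall n, is_interval (S n)) /\
  (forall x, A x -> exists n, in_interval (S n) x) /\
  LChas_sum (fun n => ilength (S n)) s.

Definition is_inf (P : LC -> Prop) (m : LC) : Prop :=
  (forall s, P s -> LCle m s) /\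
  (forall m', (forall s, P s -> LCle m' s) -> LCle m' m).

Definition outer_measurable (A : LC -> Prop) : Prop :=
  exists m : LC, is_inf (fun s => exists S : nat -> interval, cover_with_sum A S s) m.

(* The Levi-Civita field is Cauchy complete but not Dedekind complete, so the
   infimum for [A ∩ I] is built as a limit.  Fix an order [q] and a cover [D] of [A]
   whose total length exceeds [M_u(A)] by less than [d^q].  Clamping every [D n] to
   the parts below, inside and above [I], each widened by some [e n > 0] so as to
   stay a genuine interval (with the [e n] summing to an infinitesimal of order [q]),
   gives three covers.  The middle pieces cover [A ∩ I], and any cover of [A ∩ I]
   together with the outer pieces covers [A]; so the middle sum is a lower bound for
   the covers of [A ∩ I] up to an error of order [q].  These near-minima, for
   [q = 0, 1, 2, ...], form a Cauchy sequence whose limit is the infimum. *)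

From Pilot Require Import Defs.
From Stdlib Require Import Reals Lra Classical ClassicalEpsilon.
From mathcomp Require Import all_boot all_order all_algebra.
Set Implicit Arguments. Unset Strict Implicit. Unset Printing Implicit Defensive.
Import Order.TTheory GRing.Theory Num.Theory.
Import Pilot.Defs.

Section RatFacts.
Local Open Scope ring_scope.

Lemma rat_lt_add1 (q : rat) : (q < q + 1)%O.
Proof. by rewrite ltrDl ltr01. Qed.

Lemma rat_le_nat (q : rat) : exists n : nat, (q <= n%:R)%O.
Proof.
exists (Num.Def.archi_bound `|q|); apply: le_trans (ler_norm q) _.
by apply: ltW; apply: archi_boundP; exact: normr_ge0.
Qed.

Lemma seq_has_min (s : seq rat) (a : rat) :
  exists m, m \in a :: s /\ forall t, t \in a :: s -> (m <= t)%O.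
Proof.
elim: s a => [|b s IH] a.
  by exists a; split=> [|t]; rewrite inE // => /eqP->.
have [m [Hm Hmin]] := IH b; case: (leP a m) => Ham.
- exists a; split=> [|t]; first by rewrite inE eqxx.
  by rewrite inE => /orP[/eqP->//|Ht]; exact: le_trans Ham (Hmin _ Ht).
- exists m; split=> [|t]; first by rewrite inE Hm orbT.
  by rewrite inE => /orP[/eqP->|Ht]; [exact: ltW|exact: Hmin].
Qed.

Lemma rat_le_nat_monotone (m n : nat) : (m <= n)%N -> ((m%:R : rat) <= n%:R)%O.
Proof. by rewrite ler_nat. Qed.

End RatFacts.

Local Open Scope R_scope.

Lemma coef_add x y q : coef (LCadd x y) q = coef x q + coef y q. Proof. by []. Qed.
Lemma coef_opp x q : coef (LCopp x) q = - coef x q. Proof. by []. Qed.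
Lemma coef_sub x y q : coef (LCsub x y) q = coef x q - coef y q. Proof. by []. Qed.
Lemma coef0 q : coef LC0 q = 0. Proof. by []. Qed.

Definition vanishes_below (q : rat) (x : LC) := forall u, (u < q)%O -> coef x u = 0.

Definition lead_exp (x : LC) (t : rat) := coef x t <> 0 /\ vanishes_below t x.

Definition LCzero (x : LC) := forall q, coef x q = 0.
Definition LCnneg (x : LC) := LCzero x \/ LCpos x.

Lemma lead_exp_exists x q : coef x q <> 0 -> exists t, (t <= q)%O /\ lead_exp x t.
Proof.
move=> Hq; have [s Hs] := proj2_sig x q.
pose nz t := if Req_EM_T (coef x t) 0 then false else true.
have nzP t : nz t <-> coef x t <> 0 by rewrite /nz; case: Req_EM_T.
have [t [Ht Hmin]] := seq_has_min [seq t <- s | (t < q)%O && nz t] q.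
have below u : (u < q)%O -> coef x u <> 0 -> (t <= u)%O.
  by move=> Huq Hu; apply: Hmin; rewrite inE mem_filter Huq (proj2 (nzP u) Hu) Hs ?orbT.
have Htq : (t <= q)%O by apply: Hmin; rewrite inE eqxx.
exists t; split=> //; split.
- move: Ht; rewrite inE mem_filter => /orP[/eqP->//|/andP[/andP[_ /nzP]]] //.
- move=> u Hu; apply: NNPP => Hne.
  by have := below u (lt_le_trans Hu Htq) Hne; rewrite leNgt Hu.
Qed.

Lemma lead_exp_unique x t t' : lead_exp x t -> lead_exp x t' -> t = t'.
Proof.
move=> [H1 H2] [H3 H4]; case: (ltgtP t t') => // h.
- by case: H1; apply: H4.
- by case: H3; apply: H2.
Qed.

Lemma lead_exp_of_nonzero x : ~ LCzero x -> exists t, lead_exp x t.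
Proof.
move=> hz; have [q hq] : exists q, coef x q <> 0.
  by apply: NNPP => h; apply: hz => q; apply: NNPP => h'; apply: h; exists q.
by have [t [_ ht]] := lead_exp_exists hq; exists t.
Qed.

Lemma lead_exp_opp x t : lead_exp (LCopp x) t <-> lead_exp x t.
Proof.
rewrite /lead_exp /vanishes_below coef_opp.
split=> -[h1 h2]; split=> [|u hu]; try lra;
  by have := h2 u hu; rewrite ?coef_opp; lra.
Qed.

Lemma LCposP x : LCpos x <-> exists t, lead_exp x t /\ 0 < coef x t.
Proof.
split=> [[t [h1 h2]]|[t [[_ h1] h2]]]; exists t; do ?split=> //; lra.
Qed.

Lemma LCpos_lead_coef x t : LCpos x -> lead_exp x t -> 0 < coef x t.
Proof. by move=> /LCposP[t' [hl' hc]] hl; rewrite (lead_exp_unique hl hl'). Qed.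

Lemma LCnneg_lead_coef x t : LCnneg x -> lead_exp x t -> 0 < coef x t.
Proof.
move=> [hz|hp] hl; last exact: LCpos_lead_coef hp hl.
by case: hl => hne _; case: hne; apply: hz.
Qed.

Lemma lead_exp_agree x y t r : (forall u, (u < r)%O -> coef x u = coef y u) ->
  (t < r)%O -> lead_exp x t -> lead_exp y t /\ coef y t = coef x t.
Proof.
move=> E htr [h1 h2]; split; last by rewrite E.
split=> [|u hu]; first by rewrite -E.
by rewrite -E ?h2 //; exact: lt_trans hu htr.
Qed.

Lemma LCpos_agree x y t r : LCpos x -> lead_exp x t -> (t < r)%O ->
  (forall u, (u < r)%O -> coef x u = coef y u) -> LCpos y.
Proof.
move=> hx hl htr E; have [hl' hc] := lead_exp_agree E htr hl.
by apply/LCposP; exists t; split=> //; rewrite hc; exact: LCpos_lead_coef hx hl.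
Qed.

Lemma LC_trichotomy x : LCzero x \/ LCpos x \/ LCpos (LCopp x).
Proof.
case: (classic (LCzero x)) => hz; [by left|right].
have [t hl] := lead_exp_of_nonzero hz.
case: (Rlt_or_le 0 (coef x t)) => h; [left|right]; apply/LCposP; exists t; first by [].
by split; [exact/lead_exp_opp|rewrite coef_opp; case: hl => hne _; lra].
Qed.

Lemma LCpos_ext x y : (forall q, coef x q = coef y q) -> LCpos x -> LCpos y.
Proof. by move=> E [q [h1 h2]]; exists q; rewrite -E; split=> // t ht; rewrite -E h2. Qed.

Lemma LCnneg_ext x y : (forall q, coef x q = coef y q) -> LCnneg x -> LCnneg y.
Proof. by move=> E [h|h]; [left=> q; rewrite -E|right; exact: LCpos_ext h]. Qed.

Lemma LCpos_add x y : LCpos x -> LCpos y -> LCpos (LCadd x y).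
Proof.
move=> [q1 [h1 h2]] [q2 [h3 h4]].
wlog hq : x y q1 q2 h1 h2 h3 h4 / (q1 <= q2)%O.
  move=> W; case: (leP q1 q2) => hq; first exact: W hq.
  apply: LCpos_ext (W _ _ _ _ h3 h4 h1 h2 (ltW hq)) => u; rewrite !coef_add; lra.
exists q1; rewrite coef_add; split=> [|t ht].
  case: (ltP q1 q2) => [hlt|hge]; first by rewrite (h4 q1 hlt); lra.
  have E : q1 = q2 by apply/eqP; rewrite eq_le hq hge.
  rewrite E in h1 *; lra.
by rewrite coef_add h2 ?h4 //; [lra|exact: lt_le_trans ht hq].
Qed.

Lemma LCnneg_add x y : LCnneg x -> LCnneg y -> LCnneg (LCadd x y).
Proof.
move=> [hx|hx] [hy|hy].
- by left=> q; rewrite coef_add hx hy; lra.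
- by right; apply: LCpos_ext hy => q; rewrite coef_add hx; lra.
- by right; apply: LCpos_ext hx => q; rewrite coef_add hy; lra.
- by right; exact: LCpos_add.
Qed.

Lemma LCnneg_pos_add x y : LCnneg x -> LCpos y -> LCpos (LCadd x y).
Proof.
move=> [hx|hx] hy; last exact: LCpos_add.
by apply: LCpos_ext hy => q; rewrite coef_add hx; lra.
Qed.

Lemma LCnneg_opp_pos x : LCnneg x -> LCpos (LCopp x) -> False.
Proof.
move=> hx /LCposP[t [/lead_exp_opp hl hc]].
by have := LCnneg_lead_coef hx hl; rewrite coef_opp in hc; lra.
Qed.

Lemma LCnnegN x : ~ LCnneg x -> LCpos (LCopp x).
Proof. by case: (LC_trichotomy x) => [h|[h|h]] hn //; case: hn; [left|right]. Qed.

Lemma LCle_nneg x y : LCle x y <-> LCnneg (LCsub y x).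
Proof.
split=> [[h|h]|[h|h]]; [by right|left=> q|right=> q|by left].
- by rewrite coef_sub h; lra.
- by have := h q; rewrite coef_sub; lra.
Qed.

Lemma LCltNge x y : ~ LCle x y -> LClt y x.
Proof.
move=> h; have /LCnnegN hn : ~ LCnneg (LCsub y x) by move/LCle_nneg.
by apply: LCpos_ext hn => q; rewrite coef_opp !coef_sub; lra.
Qed.

Lemma LClt_le x y : LClt x y -> LCle x y. Proof. by left. Qed.
Lemma LCle_refl x : LCle x x. Proof. by right. Qed.

Lemma LCle_trans x y z : LCle x y -> LCle y z -> LCle x z.
Proof.
move=> /LCle_nneg h1 /LCle_nneg h2; apply/LCle_nneg.
by apply: LCnneg_ext (LCnneg_add h2 h1) => q; rewrite coef_add !coef_sub; lra.
Qed.

Lemma LClt_sub_pos x y e : LCle x y -> LCpos e -> LClt (LCsub x e) y.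
Proof.
move=> /LCle_nneg h he; apply: LCpos_ext (LCnneg_pos_add h he) => q.
by rewrite coef_add !coef_sub; lra.
Qed.

Lemma LCle_sub_pos x e : LCpos e -> LCle (LCsub x e) x.
Proof. by move=> he; apply: LClt_le; apply: LClt_sub_pos (LCle_refl x) he. Qed.

Lemma LCnneg_approx z :
  (forall r, exists w, LCnneg w /\ forall u, (u < r)%O -> coef w u = coef z u) ->
  LCnneg z.
Proof.
move=> H; apply: NNPP => /LCnnegN /LCposP[t [/lead_exp_opp hl hc]].
have [w [hw E]] := H (t + 1)%R.
have [hlw hcw] := lead_exp_agree (fun u hu => esym (E u hu)) (rat_lt_add1 t) hl.
by have := LCnneg_lead_coef hw hlw; rewrite hcw; rewrite coef_opp in hc; lra.
Qed.

Lemma vanishes_below_le q q' x : vanishes_below q' x -> (q <= q')%O -> vanishes_below q x.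
Proof. by move=> h hq u hu; apply: h; exact: lt_le_trans hu hq. Qed.

Lemma vanishes_below_add q x y :
  vanishes_below q x -> vanishes_below q y -> vanishes_below q (LCadd x y).
Proof. by move=> h1 h2 u hu; rewrite coef_add h1 ?h2 //; lra. Qed.

Lemma vanishes_belowN q x : ~ vanishes_below q x -> exists t, (t < q)%O /\ lead_exp x t.
Proof.
move=> h; have [u [hu hne]] : exists u, (u < q)%O /\ coef x u <> 0.
  apply: NNPP => h'; apply: h => u hu; apply: NNPP => hne; apply: h'; by exists u.
have [t [htu hl]] := lead_exp_exists hne; exists t; split=> //; exact: le_lt_trans htu hu.
Qed.

Lemma vanishes_below_sandwich q y e1 e2 : vanishes_below q e1 -> vanishes_below q e2 ->
  LCle (LCopp e1) y -> LCle y e2 -> vanishes_below q y.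
Proof.
move=> s1 s2 /LCle_nneg n1 /LCle_nneg n2; apply: NNPP => /vanishes_belowN[t [htq hl]].
case: (Rlt_or_le 0 (coef y t)) => hc.
- have E u : (u < q)%O -> coef (LCopp y) u = coef (LCsub e2 y) u.
    by move=> hu; rewrite coef_sub coef_opp s2 //; lra.
  have [hl2 hc2] := lead_exp_agree E htq (proj2 (lead_exp_opp _ _) hl).
  by have := LCnneg_lead_coef n2 hl2; rewrite hc2 coef_opp; lra.
- have E u : (u < q)%O -> coef y u = coef (LCsub y (LCopp e1)) u.
    by move=> hu; rewrite coef_sub coef_opp s1 //; lra.
  have [hl2 hc2] := lead_exp_agree E htq hl.
  by have := LCnneg_lead_coef n1 hl2; rewrite hc2; case: hl => hne _; lra.
Qed.

Lemma vanishes_below_nneg_le q y z :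
  LCnneg y -> LCle y z -> vanishes_below q z -> vanishes_below q y.
Proof.
move=> h1 h2 h3; apply: (vanishes_below_sandwich (e1 := LC0) _ h3 _ h2) => //.
by apply/LCle_nneg; apply: LCnneg_ext h1 => u; rewrite coef_sub coef_opp coef0; lra.
Qed.

Definition monomial_coef (q : rat) : rat -> R := fun t => if t == q then 1 else 0.

Lemma left_finite_monomial q : left_finite (monomial_coef q).
Proof. by move=> p; exists [:: q] => t _; rewrite /monomial_coef inE; case: eqP. Qed.

Definition LCmonomial q : LC := exist _ _ (left_finite_monomial q).

Lemma vanishes_below_monomial q : vanishes_below q (LCmonomial q).
Proof. by move=> u hu; rewrite /coef /= /monomial_coef (lt_eqF hu). Qed.

Lemma LCmonomial_pos q : LCpos (LCmonomial q).
Proof.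
exists q; split; last exact: vanishes_below_monomial.
by rewrite /coef /= /monomial_coef eqxx; lra.
Qed.

Lemma LCcvgP u l :
  LCcvg u l <-> forall q, exists N, forall n, (N <= n)%N -> vanishes_below q (LCsub (u n) l).
Proof.
split=> [H q|H eps heps].
  have [N HN] := H _ (LCmonomial_pos q); exists N => n /HN[h1 h2].
  by apply: (vanishes_below_sandwich _ _ (LClt_le h1) (LClt_le h2));
    exact: vanishes_below_monomial.
have /LCposP[t [hl _]] := heps.
have [N HN] := H (t + 1)%R; exists N => n /HN hs.
split; apply: (LCpos_agree heps hl (rat_lt_add1 t)) => v hv;
  by have := hs v hv; rewrite !coef_sub ?coef_opp; lra.
Qed.

Lemma LCcvg_unique u l l' : LCcvg u l -> LCcvg u l' -> forall t, coef l t = coef l' t.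
Proof.
move=> /LCcvgP H1 /LCcvgP H2 t.
have [N1 h1] := H1 (t + 1)%R; have [N2 h2] := H2 (t + 1)%R.
have := h1 _ (leq_maxl N1 N2) t (rat_lt_add1 t).
have := h2 _ (leq_maxr N1 N2) t (rat_lt_add1 t).
by rewrite !coef_sub; lra.
Qed.

Lemma LCcvg_ext u v l l' : (forall n q, coef (u n) q = coef (v n) q) ->
  (forall q, coef l q = coef l' q) -> LCcvg u l -> LCcvg v l'.
Proof.
move=> E1 E2 /LCcvgP H; apply/LCcvgP => q; have [N HN] := H q.
by exists N => n hn t ht; have := HN n hn t ht; rewrite !coef_sub E1 E2.
Qed.

Lemma LCcvg_add u v l l' : LCcvg u l -> LCcvg v l' ->
  LCcvg (fun n => LCadd (u n) (v n)) (LCadd l l').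
Proof.
move=> /LCcvgP H1 /LCcvgP H2; apply/LCcvgP => q.
have [N1 h1] := H1 q; have [N2 h2] := H2 q; exists (maxn N1 N2) => n hn t ht.
have := h1 n (leq_trans (leq_maxl _ _) hn) t ht.
have := h2 n (leq_trans (leq_maxr _ _) hn) t ht.
by rewrite !coef_sub !coef_add; lra.
Qed.

(* The limit is read off coefficientwise: below [q] all late terms agree. *)
Lemma LCcauchy_cvg (x : nat -> LC) :
  (forall q, exists N, forall n, (N <= n)%N -> vanishes_below q (LCsub (x n) (x N))) ->
  exists l, LCcvg x l.
Proof.
move=> /choice[N HN].
have agree q n t : (N q <= n)%N -> (t < q)%O -> coef (x n) t = coef (x (N q)) t.
  by move=> hn ht; have := HN q n hn t ht; rewrite coef_sub; lra.
pose c t := coef (x (N (t + 1)%R)) t.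
have key q n t : (N q <= n)%N -> (t < q)%O -> coef (x n) t = c t.
  move=> hn ht; set M := maxn n (N (t + 1)%R).
  rewrite (agree q n t hn ht) -(agree q M t) //; last exact: leq_trans hn (leq_maxl _ _).
  exact: agree (leq_maxr _ _) (rat_lt_add1 t).
have lf : left_finite c.
  move=> q; have [s hs] := proj2_sig (x (N q)) q; exists s => t ht hne.
  by apply: (hs t ht); rewrite -/(coef _ t) (key q (N q) t (leqnn _) ht).
exists (exist _ c lf); apply/LCcvgP => q; exists (N q) => n hn t ht.
by rewrite coef_sub (key q n t hn ht) /coef /=; lra.
Qed.

Lemma LCpartialS a n : LCpartial a n.+1 = LCadd (LCpartial a n) (a n).
Proof. by []. Qed.

Lemma has_sum_terms_vanish a s : LChas_sum a s ->
  forall q, exists N, forall n, (N <= n)%N -> vanishes_below q (a n).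
Proof.
move=> /LCcvgP H q; have [N HN] := H q; exists N => n hn t ht.
have := HN n hn t ht; have := HN n.+1 (leqW hn) t ht.
by rewrite !coef_sub LCpartialS coef_add; lra.
Qed.

Lemma has_sum_of_terms_vanish a :
  (forall q, exists N, forall n, (N <= n)%N -> vanishes_below q (a n)) ->
  exists s, LChas_sum a s.
Proof.
move=> H; apply: LCcauchy_cvg => q; have [N HN] := H q; exists N => n hn.
suff tail k : vanishes_below q (LCsub (LCpartial a (N + k)) (LCpartial a N)).
  by have := tail (n - N)%N; rewrite subnKC.
elim: k => [|k IH] t ht; first by rewrite addn0 coef_sub; lra.
have := IH t ht; rewrite addnS !coef_sub LCpartialS coef_add.
by rewrite (HN (N + k)%N (leq_addr _ _) t ht); lra.
Qed.

Lemma has_sum_le a z sz : LChas_sum z sz -> (forall n, LCnneg (a n)) ->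
  (forall n, LCle (a n) (z n)) -> exists s, LChas_sum a s.
Proof.
move=> hz h1 h2; apply: has_sum_of_terms_vanish => q.
have [N hN] := has_sum_terms_vanish hz q; exists N => n hn.
exact: vanishes_below_nneg_le (h1 n) (h2 n) (hN n hn).
Qed.

Lemma has_sum_ext a b s s' : (forall n q, coef (a n) q = coef (b n) q) ->
  (forall q, coef s q = coef s' q) -> LChas_sum a s -> LChas_sum b s'.
Proof.
move=> E1 E2; apply: LCcvg_ext E2 => n q.
by elim: n => [|n IH] //; rewrite !LCpartialS !coef_add IH E1.
Qed.

Lemma has_sum_add a b s t : LChas_sum a s -> LChas_sum b t ->
  LChas_sum (fun n => LCadd (a n) (b n)) (LCadd s t).
Proof.
move=> h1 h2; apply: LCcvg_ext (LCcvg_add h1 h2) => // n q.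
elim: n => [|n IH]; first by rewrite coef_add /=; lra.
by rewrite !LCpartialS !coef_add; rewrite coef_add in IH; lra.
Qed.

Definition interleave {T} (a b : nat -> T) (n : nat) : T :=
  if odd n then b n./2 else a n./2.

Lemma interleave_even {T} (a b : nat -> T) k : interleave a b k.*2 = a k.
Proof. by rewrite /interleave odd_double half_double. Qed.

Lemma interleave_odd {T} (a b : nat -> T) k : interleave a b k.*2.+1 = b k.
Proof. by rewrite /interleave /= odd_double /= uphalf_double. Qed.

Lemma interleave_map {T U} (f : T -> U) a b n :
  f (interleave a b n) = interleave (fun k => f (a k)) (fun k => f (b k)) n.
Proof. by rewrite /interleave; case: odd. Qed.

Lemma has_sum_interleave a b s t : LChas_sum a s -> LChas_sum b t ->
  LChas_sum (interleave a b) (LCadd s t).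
Proof.
move=> /LCcvgP H1 /LCcvgP H2; apply/LCcvgP => q.
have E k u : coef (LCpartial (interleave a b) k) u =
    coef (LCpartial a (uphalf k)) u + coef (LCpartial b k./2) u.
  elim: k u => [|k IH] u; first by rewrite /=; lra.
  rewrite LCpartialS coef_add IH /interleave.
  rewrite -[uphalf k.+1]/(k./2).+1 -[k.+1./2]/(uphalf k) uphalf_half.
  by case: (odd k); rewrite ?add1n ?add0n !LCpartialS !coef_add; lra.
have [N1 h1] := H1 q; have [N2 h2] := H2 q.
exists (maxn N1 N2).*2 => k hk u hu.
have hh : (maxn N1 N2 <= k./2)%N by rewrite -[maxn N1 N2]half_double; apply: half_leq.
have hu2 : (k./2 <= uphalf k)%N by rewrite uphalf_half leq_addl.
have := h1 (uphalf k) (leq_trans (leq_maxl _ _) (leq_trans hh hu2)) u hu.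
have := h2 k./2 (leq_trans (leq_maxr _ _) hh) u hu.
by rewrite !coef_sub E coef_add; lra.
Qed.

Section Shift.
Local Open Scope ring_scope.

(* Multiplication by the monomial [d^K]. *)
Definition shift_coef (K : rat) (x : LC) : rat -> R := fun u => coef x (u - K).

Lemma left_finite_shift K x : left_finite (shift_coef K x).
Proof.
move=> q; have [s hs] := proj2_sig x (q - K).
exists [seq t + K | t <- s] => u hu hne; rewrite -(subrK K u).
by apply: map_f; apply: hs => //; rewrite ltrD2r.
Qed.

Definition LCshift K x : LC := exist _ _ (left_finite_shift K x).

Lemma coef_shift K x u : coef (LCshift K x) u = coef x (u - K). Proof. by []. Qed.

Lemma LCpos_shift K x : LCpos x -> LCpos (LCshift K x).
Proof.
move=> [q [h1 h2]]; exists (q + K); rewrite coef_shift addrK; split=> // t ht.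
by rewrite coef_shift h2 // ltrBlDr.
Qed.

Lemma vanishes_below_shift x t q :
  vanishes_below t x -> vanishes_below q (LCshift (q - t) x).
Proof. by move=> h u hu; rewrite coef_shift h // ltrBlDr addrC subrK. Qed.

Lemma has_sum_shift K a s :
  LChas_sum a s -> LChas_sum (fun n => LCshift K (a n)) (LCshift K s).
Proof.
move=> /LCcvgP H; apply/LCcvgP => q.
have E n u : coef (LCpartial (fun n => LCshift K (a n)) n) u = coef (LCpartial a n) (u - K).
  by elim: n u => [|n IH] u //; rewrite !LCpartialS !coef_add IH coef_shift.
have [N HN] := H (q - K); exists N => n hn u hu.
by have := HN n hn (u - K); rewrite ltrD2r !coef_sub E coef_shift => /(_ hu).
Qed.

End Shift.

Lemma LC_vanishes_below x : exists t, vanishes_below t x.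
Proof.
case: (classic (LCzero x)) => hz; first by exists 0%R => u _; apply: hz.
by have [t [_ ht]] := lead_exp_of_nonzero hz; exists t.
Qed.

Lemma small_positive_series (a : nat -> LC) s q :
  (forall n, LCpos (a n)) -> LChas_sum a s ->
  exists e E, (forall n, LCpos (e n)) /\ LChas_sum e E /\ vanishes_below q E.
Proof.
move=> hpos hs; have [t ht] := LC_vanishes_below s.
exists (fun n => LCshift (q - t)%R (a n)), (LCshift (q - t)%R s).
split; first by move=> n; exact: LCpos_shift.
by split; [exact: has_sum_shift|exact: vanishes_below_shift].
Qed.

Definition LCmin x y := if excluded_middle_informative (LCle x y) then x else y.
Definition LCmax x y := if excluded_middle_informative (LCle x y) then y else x.

Lemma coef_min_max x y q : coef (LCmin x y) q + coef (LCmax x y) q = coef x q + coef y q.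
Proof. by rewrite /LCmin /LCmax; case: excluded_middle_informative => h /=; lra. Qed.

Lemma LCmin_le_l x y : LCle (LCmin x y) x.
Proof.
rewrite /LCmin; case: excluded_middle_informative => h; first exact: LCle_refl.
exact/LClt_le/LCltNge.
Qed.

Lemma LCmin_le_r x y : LCle (LCmin x y) y.
Proof. by rewrite /LCmin; case: excluded_middle_informative => h //; exact: LCle_refl. Qed.

Lemma LCle_min z x y : LCle z x -> LCle z y -> LCle z (LCmin x y).
Proof. by rewrite /LCmin; case: excluded_middle_informative. Qed.

Lemma LCle_max_l x y : LCle x (LCmax x y).
Proof. by rewrite /LCmax; case: excluded_middle_informative => h //; exact: LCle_refl. Qed.

Lemma LCle_max_r x y : LCle y (LCmax x y).
Proof.
rewrite /LCmax; case: excluded_middle_informative => h; first exact: LCle_refl.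
exact/LClt_le/LCltNge.
Qed.

Lemma LCmax_le x y z : LCle x z -> LCle y z -> LCle (LCmax x y) z.
Proof. by rewrite /LCmax; case: excluded_middle_informative. Qed.

Definition LCmonotone (f : LC -> LC) := forall x y, LCle x y -> LCle (f x) (f y).

Lemma LCmonotone_min c : LCmonotone (fun x => LCmin x c).
Proof.
move=> x y h; apply: LCle_min; [exact: LCle_trans (LCmin_le_l _ _) h|exact: LCmin_le_r].
Qed.

Lemma LCmonotone_max c : LCmonotone (fun x => LCmax x c).
Proof.
move=> x y h; apply: LCmax_le; [exact: LCle_trans h (LCle_max_l _ _)|exact: LCle_max_r].
Qed.

Lemma LCmonotone_comp f g : LCmonotone f -> LCmonotone g -> LCmonotone (fun x => g (f x)).
Proof. by move=> hf hg x y /hf /hg. Qed.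

Lemma in_interval_le I x : in_interval I x -> LCle (ia I) x /\ LCle x (ib I).
Proof.
by rewrite /in_interval; case: (iclosed_l I); case: (iclosed_r I) => -[h1 h2];
  split=> //; exact: LClt_le.
Qed.

Lemma in_interval_lt I x : LClt (ia I) x -> LClt x (ib I) -> in_interval I x.
Proof.
by move=> h1 h2; split; [case: (iclosed_l I)|case: (iclosed_r I)] => //; exact: LClt_le.
Qed.

Definition padded_image (f : LC -> LC) (J : interval) (e : LC) : interval :=
  Interval (LCsub (f (ia J)) e) (f (ib J)) true true.

Lemma is_interval_padded_image f J e : LCmonotone f -> is_interval J -> LCpos e ->
  is_interval (padded_image f J e).
Proof. by move=> hf hJ he; apply: LClt_sub_pos he; apply/hf/LClt_le. Qed.

Lemma in_padded_image f J e x : LCmonotone f -> LCpos e -> in_interval J x ->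
  LCle (f x) x -> LCle x (f x) -> in_interval (padded_image f J e) x.
Proof.
move=> hf he /in_interval_le[hax hxb] hfx hxf; split=> /=.
- apply: LCle_trans (LCle_sub_pos _ he) _; exact: LCle_trans (hf _ _ hax) hfx.
- exact: LCle_trans hxf (hf _ _ hxb).
Qed.

Definition near_minimum (P : LC -> Prop) (q : rat) (p : LC) :=
  P p /\ exists eta, vanishes_below q eta /\
    forall p', P p' -> LCle (LCsub p eta) p'.

Section InfOfNearMinima.
Variables (P : LC -> Prop) (p eta : nat -> LC).
Hypothesis p_in : forall n, P (p n).
Hypothesis eta_small : forall n, vanishes_below (n%:R)%R (eta n).
Hypothesis p_near_min : forall n p', P p' -> LCle (LCsub (p n) (eta n)) p'.

Lemma near_minima_cvg : exists c, LCcvg p c.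
Proof.
apply: LCcauchy_cvg => q; have [N hN] := rat_le_nat q; exists N => n hn.
have hq : (q <= (n%:R)%R)%O := le_trans hN (rat_le_nat_monotone hn).
apply: (vanishes_below_sandwich (e1 := eta N) (e2 := eta n)).
- exact: vanishes_below_le (@eta_small N) hN.
- exact: vanishes_below_le (@eta_small n) hq.
- apply/LCle_nneg; apply: LCnneg_ext (proj1 (LCle_nneg _ _) (p_near_min N (p_in n))) => u.
  by rewrite !coef_sub coef_opp; lra.
- apply/LCle_nneg; apply: LCnneg_ext (proj1 (LCle_nneg _ _) (p_near_min n (p_in N))) => u.
  by rewrite !coef_sub; lra.
Qed.

Lemma near_minima_limit_is_inf c : LCcvg p c -> is_inf P c.
Proof.
move=> /LCcvgP hc.
have pick r : exists n, (forall u, (u < r)%O -> coef (p n) u = coef c u) /\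
    vanishes_below r (eta n).
  have [N1 h1] := hc r; have [N2 h2] := rat_le_nat r; exists (maxn N1 N2); split.
  - by move=> u hu; have := h1 _ (leq_maxl N1 N2) u hu; rewrite coef_sub; lra.
  - apply: vanishes_below_le (@eta_small _) _.
    exact: le_trans h2 (rat_le_nat_monotone (leq_maxr _ _)).
split=> [s hs|m' hm']; apply/LCle_nneg; apply: LCnneg_approx => r;
  have [n [hpn hen]] := pick r.
- exists (LCsub s (LCsub (p n) (eta n))); split; first exact/LCle_nneg/p_near_min.
  by move=> u hu; rewrite !coef_sub hpn // hen //; lra.
- exists (LCsub (p n) m'); split; first exact/LCle_nneg/hm'.
  by move=> u hu; rewrite !coef_sub hpn.
Qed.

End InfOfNearMinima.

Lemma is_inf_of_near_minima (P : LC -> Prop) :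
  (forall q, exists p, near_minimum P q p) -> exists m, is_inf P m.
Proof.
move=> H; have [p hp] := choice _ (fun n => H (n%:R)%R).
have [eta heta] := choice _ (fun n => proj2 (hp n)).
have p_in n : P (p n) by case: (hp n).
have eta_small n : vanishes_below (n%:R)%R (eta n) by case: (heta n).
have p_near_min n : forall p', P p' -> LCle (LCsub (p n) (eta n)) p' by case: (heta n).
have [c hc] := near_minima_cvg p_in eta_small p_near_min.
by exists c; exact: near_minima_limit_is_inf hc.
Qed.

Lemma is_inf_approx P m d : is_inf P m -> LCpos d -> exists s, P s /\ LClt s (LCadd m d).
Proof.
move=> [_ hglb] hd; apply: NNPP => hne.
have lb s : P s -> LCle (LCadd m d) s.
  by move=> hs; apply: NNPP => hle; apply: hne; exists s; split=> //; exact: LCltNge.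
have /LCle_nneg hn := hglb _ lb.
by apply: (LCnneg_opp_pos hn); apply: LCpos_ext hd => q; rewrite coef_opp coef_sub coef_add; lra.
Qed.

Definition covers_sum (A : LC -> Prop) (s : LC) := exists S, cover_with_sum A S s.

Definition clamp_below (a x : LC) := LCmin x a.
Definition clamp_between (a b x : LC) := LCmin (LCmax x a) b.
Definition clamp_above (a b x : LC) := LCmax (LCmax x a) b.

Lemma coef_clamps a b x u :
  coef (clamp_below a x) u + coef (clamp_between a b x) u + coef (clamp_above a b x) u =
  coef x u + coef a u + coef b u.
Proof.
rewrite /clamp_below /clamp_between /clamp_above.
by have := coef_min_max x a u; have := coef_min_max (LCmax x a) b u; lra.
Qed.

Section Pieces.
Variables (A : LC -> Prop) (I : interval) (D : nat -> interval) (e : nat -> LC) (sD E : LC).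
Hypothesis D_cover : cover_with_sum A D sD.
Hypothesis e_pos : forall n, LCpos (e n).
Hypothesis e_sum : LChas_sum e E.

Let a := ia I.
Let b := ib I.
Let Dl n := padded_image (clamp_below a) (D n) (e n).
Let Dm n := padded_image (clamp_between a b) (D n) (e n).
Let Dr n := padded_image (clamp_above a b) (D n) (e n).

Lemma pieces_are_intervals n :
  [/\ is_interval (Dl n), is_interval (Dm n) & is_interval (Dr n)].
Proof.
have [hD _] := D_cover; split; apply: is_interval_padded_image (hD n) (e_pos n).
- exact: LCmonotone_min.
- exact: LCmonotone_comp (LCmonotone_max a) (LCmonotone_min b).
- exact: LCmonotone_comp (LCmonotone_max a) (LCmonotone_max b).
Qed.

Lemma coef_pieces n u :
  coef (ilength (Dl n)) u + coef (ilength (Dm n)) u + coef (ilength (Dr n)) u =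
  coef (ilength (D n)) u + 3 * coef (e n) u.
Proof.
rewrite /ilength /Dl /Dm /Dr; cbn [ia ib padded_image]; rewrite !coef_sub.
by have := coef_clamps a b (ia (D n)) u; have := coef_clamps a b (ib (D n)) u; lra.
Qed.

Lemma piece_sums : exists sl sm sr,
  [/\ LChas_sum (fun n => ilength (Dl n)) sl, LChas_sum (fun n => ilength (Dm n)) sm,
      LChas_sum (fun n => ilength (Dr n)) sr &
      forall u, coef sl u + coef sm u + coef sr u = coef sD u + 3 * coef E u].
Proof.
have [_ [_ hD]] := D_cover.
pose z n := LCadd (ilength (D n)) (LCadd (e n) (LCadd (e n) (e n))).
have hz : LChas_sum z (LCadd sD (LCadd E (LCadd E E))).
  exact: has_sum_add hD (has_sum_add e_sum (has_sum_add e_sum e_sum)).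
have le_z n x y w : LCpos y -> LCpos w ->
    (forall u, coef x u + coef y u + coef w u = coef (z n) u) -> LCle x (z n).
  move=> hy hw E3; apply/LCle_nneg; right.
  by apply: LCpos_ext (LCpos_add hy hw) => u; have := E3 u; rewrite !coef_sub coef_add; lra.
have Ez n u : coef (z n) u = coef (ilength (D n)) u + 3 * coef (e n) u.
  by rewrite /z !coef_add; lra.
have [sl hl] : exists s, LChas_sum (fun n => ilength (Dl n)) s.
  apply: (has_sum_le hz) => n; first by right; case: (pieces_are_intervals n).
  case: (pieces_are_intervals n) => _ hm hr; apply: le_z hm hr _ => u.
  by rewrite Ez -coef_pieces /ilength; lra.
have [sm hm] : exists s, LChas_sum (fun n => ilength (Dm n)) s.
  apply: (has_sum_le hz) => n; first by right; case: (pieces_are_intervals n).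
  case: (pieces_are_intervals n) => hl' _ hr; apply: le_z hl' hr _ => u.
  by rewrite Ez -coef_pieces /ilength; lra.
have [sr hr] : exists s, LChas_sum (fun n => ilength (Dr n)) s.
  apply: (has_sum_le hz) => n; first by right; case: (pieces_are_intervals n).
  case: (pieces_are_intervals n) => hl' hm' _; apply: le_z hl' hm' _ => u.
  by rewrite Ez -coef_pieces /ilength; lra.
exists sl, sm, sr; split=> // u.
have h3 : LChas_sum z (LCadd sl (LCadd sm sr)).
  apply: has_sum_ext (has_sum_add hl (has_sum_add hm hr)) => // n v.
  by rewrite Ez -coef_pieces !coef_add; lra.
by have := LCcvg_unique h3 hz u; rewrite !coef_add; lra.
Qed.

Lemma middle_pieces_cover sm : LChas_sum (fun n => ilength (Dm n)) sm ->
  cover_with_sum (fun x => A x /\ in_interval I x) Dm sm.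
Proof.
have [_ [hcov _]] := D_cover; move=> hm; split=> [n|]; first by case: (pieces_are_intervals n).
split=> // x [/hcov[n hn] /in_interval_le[hax hxb]]; exists n.
apply: (in_padded_image _ (e_pos n) hn).
- exact: LCmonotone_comp (LCmonotone_max a) (LCmonotone_min b).
- exact: LCle_trans (LCmin_le_l _ _) (LCmax_le (LCle_refl x) hax).
- exact: LCle_min (LCle_max_l _ _) hxb.
Qed.

Lemma outer_pieces_cover C p sl sr :
  LChas_sum (fun n => ilength (Dl n)) sl -> LChas_sum (fun n => ilength (Dr n)) sr ->
  cover_with_sum (fun x => A x /\ in_interval I x) C p ->
  cover_with_sum A (interleave C (interleave Dl Dr)) (LCadd p (LCadd sl sr)).
Proof.
have [_ [hDcov _]] := D_cover; move=> hl hr [hC [hCcov hCsum]]; split.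
  move=> n; rewrite /interleave; case: odd => //; case: odd;
    by case: (pieces_are_intervals n./2./2).
split; last first.
  apply: has_sum_ext (has_sum_interleave hCsum (has_sum_interleave hl hr)) => // n u.
  by rewrite interleave_map /interleave; case: odd => //; rewrite interleave_map.
move=> x hA; case: (classic (in_interval I x)) => hI.
  by have [k hk] := hCcov x (conj hA hI); exists k.*2; rewrite interleave_even.
have [n hn] := hDcov x hA.
case: (classic (LCle x a)) => hxa.
  exists (n.*2).*2.+1; rewrite interleave_odd interleave_even.
  apply: (in_padded_image (LCmonotone_min a) (e_pos n) hn (LCmin_le_l _ _)).
  exact: LCle_min (LCle_refl x) hxa.
have hax := LCltNge hxa.
case: (classic (LCle b x)) => hbx; last by case: hI; apply: in_interval_lt => //; exact: LCltNge.
exists (n.*2.+1).*2.+1; rewrite !interleave_odd.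
apply: (in_padded_image _ (e_pos n) hn).
- exact: LCmonotone_comp (LCmonotone_max a) (LCmonotone_max b).
- exact: LCmax_le (LCmax_le (LCle_refl x) (LClt_le hax)) hbx.
- exact: LCle_trans (LCle_max_l x a) (LCle_max_l _ b).
Qed.

End Pieces.

Lemma near_minimum_restrict A I m q : is_inf (covers_sum A) m ->
  exists p, near_minimum (covers_sum (fun x => A x /\ in_interval I x)) q p.
Proof.
move=> hinf; have [sD [[D hD] hsD]] := is_inf_approx hinf (LCmonomial_pos q).
have [e [E [he [hE hEq]]]] := small_positive_series q (proj1 hD) (proj2 (proj2 hD)).
have [sl [sm [sr [hl hm hr hsum]]]] := piece_sums I hD he hE.
exists sm; split; first by eexists; exact: (middle_pieces_cover (I := I) hD he hm).
exists (LCadd (LCmonomial q) (LCadd E (LCadd E E))); split.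
  by do 3?apply: vanishes_below_add => //; exact: vanishes_below_monomial.
move=> p' [C hC]; have [hcov _] := hinf.
have /hcov/LCle_nneg hm' : covers_sum A (LCadd p' (LCadd sl sr)).
  by eexists; exact: (outer_pieces_cover (I := I) hD he hl hr hC).
apply: LClt_le; apply: LCpos_ext (LCnneg_pos_add hm' hsD) => u.
by have := hsum u; rewrite !(coef_sub, coef_add); lra.
Qed.

Theorem proposition3p3 (A : LC -> Prop) (I : interval) :
  is_interval I -> outer_measurable A ->
  outer_measurable (fun x => A x /\ in_interval I x).
Proof.
move=> _ [m hm].
exact: is_inf_of_near_minima (fun q => near_minimum_restrict I q hm).
Qed.
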